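(* Let $A\in\mathbb{R}^{n\times n}$, $B\in\mathbb{R}^{n\times r}$, $j_{\max}\ge1$, $0<\varepsilon<1$, and shifts $\alpha_1,\ldots,\alpha_{j_{\max}}\in\mathbb{C}$ with $\mathrm{Re}(\alpha_j)<0$, $A+\alpha_jI$ nonsingular, and $\|\mathcal{C}_j\|<1$ for $j=1,\ldots,j_{\max}$. Run the inexact LR-ADI iteration (with $M=I$) of the context, and suppose that for all $1\le k\le j_{\max}$ $$\|s_k\|\le\tfrac12\Big(\sqrt{\|w_{k-1}\|^2+\tfrac{2\varepsilon}{\sigma_k\gamma_k^2j_{\max}}}-\|w_{k-1}\|\Big),\qquad \sigma_k:=\|(A+\alpha_kI)^{-1}\|.$$ Then $\|\mathcal{R}^{\mathrm{comp}}_{j_{\max}}\|\le\|\mathcal{R}^{\mathrm{exact}}_{j_{\max}}\|+\varepsilon$.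
   Context: $\mathcal{C}_k:=(A+\alpha_kI)^{-1}(A-\overline{\alpha_k}I)$. Inexact LR-ADI iteration: $w_0:=B$, $\gamma_k:=\sqrt{-2\,\mathrm{Re}(\alpha_k)}$; $v_k$ arbitrary with $s_k:=w_{k-1}-(A+\alpha_kI)v_k$, $w_k:=w_{k-1}+\gamma_k^2v_k$. Computed residual $\mathcal{R}^{\mathrm{comp}}_k:=w_kw_k^*$. Exact LR-ADI residual (all $s_k=0$, same shifts): $\mathcal{R}^{\mathrm{exact}}_k:=w^{\mathrm{exact}}_k(w^{\mathrm{exact}}_k)^*$ with $w^{\mathrm{exact}}_k:=\mathcal{C}_k\cdots\mathcal{C}_1B$. Norms are spectral. *)

From HB Require Import structures.
From mathcomp Require Import all_boot all_order all_algebra.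
From mathcomp Require Import complex.
From mathcomp Require Import boolp classical_sets reals.
Set Implicit Arguments. Unset Strict Implicit. Unset Printing Implicit Defensive.
Import Order.TTheory GRing.Theory Num.Theory.
Local Open Scope ring_scope.

Definition vnorm (R : realType) (p : nat) (x : 'cV[R[i]]_p) : R :=
  Num.sqrt (\sum_(i < p) (complex.Re (x i 0) ^+ 2 + complex.Im (x i 0) ^+ 2)).

Definition specnorm (R : realType) (m p : nat) (M : 'M[R[i]]_(m, p)) : R :=
  sup [set t : R | exists x : 'cV[R[i]]_p, vnorm x <= 1 /\ t = vnorm (M *m x)].

Definition ctrans (R : realType) (m p : nat) (M : 'M[R[i]]_(m, p)) : 'M[R[i]]_(p, m) :=
  map_mx (@conjc R) M^T.

Definition cmx (R : realType) (m p : nat) (M : 'M[R]_(m, p)) : 'M[R[i]]_(m, p) :=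
  map_mx (fun x : R => (x%:C)%C) M.

Definition shiftA (R : realType) (n : nat) (A : 'M[R]_n) (alpha : R[i]) : 'M[R[i]]_n :=
  cmx A + alpha%:M.

Definition cayley (R : realType) (n : nat) (A : 'M[R]_n) (alpha : R[i]) : 'M[R[i]]_n :=
  invmx (shiftA A alpha) *m (cmx A - (conjc alpha)%:M).

Definition gam (R : realType) (alpha : R[i]) : R := Num.sqrt (- 2 * complex.Re alpha).

Fixpoint w_inex (R : realType) (n r : nat) (B : 'M[R]_(n, r)) (alpha : nat -> R[i])
    (v : nat -> 'M[R[i]]_(n, r)) (k : nat) : 'M[R[i]]_(n, r) :=
  match k with
  | 0 => cmx B
  | k'.+1 => w_inex B alpha v k' + ((gam (alpha k) ^+ 2)%:C)%C *: v k
  end.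

(* residual of the linear solve at step k >= 1:  s_k = w_{k-1} - (A + alpha_k I) v_k *)
Definition s_res (R : realType) (n r : nat) (A : 'M[R]_n) (B : 'M[R]_(n, r))
    (alpha : nat -> R[i]) (v : nat -> 'M[R[i]]_(n, r)) (k : nat) : 'M[R[i]]_(n, r) :=
  w_inex B alpha v k.-1 - shiftA A (alpha k) *m v k.

Fixpoint w_exact (R : realType) (n r : nat) (A : 'M[R]_n) (B : 'M[R]_(n, r))
    (alpha : nat -> R[i]) (k : nat) : 'M[R[i]]_(n, r) :=
  match k with
  | 0 => cmx B
  | k'.+1 => cayley A (alpha k) *m w_exact A B alpha k'
  end.

From HB Require Import structures.
From mathcomp Require Import all_boot all_order all_algebra.
From mathcomp Require Import complex.
From mathcomp Require Import boolp classical_sets reals.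
From mathcomp Require Import ring lra.
Set Implicit Arguments. Unset Strict Implicit. Unset Printing Implicit Defensive.
Import Order.TTheory GRing.Theory Num.Theory.
Local Open Scope ring_scope.

(* Let [W_k] and [X_k] be the inexact and the exact LR-ADI factors. An inexact step reads
   [W_k = C_k W_(k-1) + e_k] with [e_k = - gamma_k^2 (A + alpha_k I)^-1 s_k], while
   [X_k = C_k X_(k-1)]. Hence the Gram gap [D_k = W_k W_k^* - X_k X_k^*] satisfies
   [D_k = C_k D_(k-1) C_k^* + C_k W_(k-1) e_k^* + e_k (C_k W_(k-1))^* + e_k e_k^*], and
   [||C_k|| <= 1] gives [||D_k|| <= ||D_(k-1)|| + 2 ||W_(k-1)|| ||e_k|| + ||e_k||^2].
   As [gamma_k^2 (A + alpha_k I)^-1 = C_k - I] has norm at most 2, the tolerance on [s_k]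
   bounds each increment by [eps / jmax], so [||D_jmax|| <= eps]. *)

Lemma discr_le_of_quadratic_ge0 (R : realFieldType) (a b c : R) : 0 <= c ->
  (forall t, 0 <= a + 2 * t * b + t ^+ 2 * c) -> b ^+ 2 <= a * c.
Proof.
move=> c_ge0 q_ge0; have [c_gt0|] := ltrP 0 c.
  have := q_ge0 (- b / c).
  have -> : a + 2 * (- b / c) * b + (- b / c) ^+ 2 * c = (a * c - b ^+ 2) / c.
    by field; rewrite gt_eqF.
  by rewrite pmulr_lge0 ?invr_gt0 // subr_ge0.
move=> c_le0; have c0 : c = 0 by apply/le_anti; rewrite c_le0 c_ge0.
subst c; rewrite mulr0.
have [->|b_neq0] := eqVneq b 0; first by rewrite expr0n.
have := q_ge0 (- (a + 1) / (2 * b)).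
have -> : a + 2 * (- (a + 1) / (2 * b)) * b + (- (a + 1) / (2 * b)) ^+ 2 * 0 = -1.
  by field; rewrite b_neq0.
by rewrite oppr_ge0 ler10.
Qed.

Section EuclideanNorm.
Variable R : realType.
Implicit Types (z : R[i]) (t : R).

Definition sqnormc z : R := complex.Re z ^+ 2 + complex.Im z ^+ 2.

Lemma sqnormc_ge0 z : 0 <= sqnormc z.
Proof. by rewrite addr_ge0 ?sqr_ge0. Qed.

Lemma sqnormcR t : sqnormc (t%:C)%C = t ^+ 2.
Proof. by rewrite /sqnormc expr0n addr0. Qed.

Variable p : nat.
Implicit Types x y : 'cV[R[i]]_p.

Definition sqvnorm x : R := \sum_i sqnormc (x i 0).

Definition redot x y : R :=
  \sum_i (complex.Re (x i 0) * complex.Re (y i 0) + complex.Im (x i 0) * complex.Im (y i 0)).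

Lemma sqvnorm_ge0 x : 0 <= sqvnorm x.
Proof. by apply: sumr_ge0 => i _; apply: sqnormc_ge0. Qed.

Lemma vnorm_ge0 x : 0 <= vnorm x.
Proof. exact: sqrtr_ge0. Qed.

Lemma sqr_vnorm x : vnorm x ^+ 2 = sqvnorm x.
Proof. by rewrite sqr_sqrtr // sqvnorm_ge0. Qed.

Lemma sqvnorm_redot x : sqvnorm x = redot x x.
Proof. by apply: eq_bigr => i _; rewrite /sqnormc !expr2. Qed.

Lemma sqvnormD x y : sqvnorm (x + y) = sqvnorm x + 2 * redot x y + sqvnorm y.
Proof.
rewrite /sqvnorm /redot mulr_sumr -!big_split; apply: eq_bigr => i _ /=.
by rewrite !mxE; case: (x i 0) => a b; case: (y i 0) => c d; rewrite /sqnormc /=; ring.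
Qed.

Lemma sqvnormZ z x : sqvnorm (z *: x) = sqnormc z * sqvnorm x.
Proof.
rewrite /sqvnorm mulr_sumr; apply: eq_bigr => i _.
by rewrite !mxE; case: (x i 0) => a b; case: z => c d; rewrite /sqnormc /=; ring.
Qed.

Lemma redotZr t x y : redot x ((t%:C)%C *: y) = t * redot x y.
Proof.
rewrite /redot mulr_sumr; apply: eq_bigr => i _.
by rewrite !mxE; case: (x i 0) => a b; case: (y i 0) => c d /=; ring.
Qed.

Lemma redot_CauchySchwarz x y : redot x y ^+ 2 <= sqvnorm x * sqvnorm y.
Proof.
apply: discr_le_of_quadratic_ge0 => [|t]; first exact: sqvnorm_ge0.
by have := sqvnorm_ge0 (x + (t%:C)%C *: y); rewrite sqvnormD redotZr sqvnormZ sqnormcR mulrA.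
Qed.

Lemma redot_le x y : redot x y <= vnorm x * vnorm y.
Proof.
rewrite (le_trans (ler_norm _)) // -sqrtr_sqr -sqrtrM ?sqvnorm_ge0 //.
by rewrite ler_sqrt ?mulr_ge0 ?sqvnorm_ge0 // redot_CauchySchwarz.
Qed.

Lemma ler_vnormD x y : vnorm (x + y) <= vnorm x + vnorm y.
Proof.
rewrite {1}/vnorm -/(sqvnorm _) -(ger0_norm (addr_ge0 (vnorm_ge0 x) (vnorm_ge0 y))).
rewrite -sqrtr_sqr ler_sqrt ?sqr_ge0 // sqvnormD sqrrD !sqr_vnorm.
by have := redot_le x y; lra.
Qed.

Lemma vnormZ z x : vnorm (z *: x) = Num.sqrt (sqnormc z) * vnorm x.
Proof. by rewrite /vnorm -/(sqvnorm _) sqvnormZ sqrtrM ?sqnormc_ge0. Qed.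

Lemma vnormZR t x : vnorm ((t%:C)%C *: x) = `|t| * vnorm x.
Proof. by rewrite vnormZ sqnormcR sqrtr_sqr. Qed.

Lemma vnorm0 : vnorm (0 : 'cV[R[i]]_p) = 0.
Proof. by rewrite -(scale0r 0) -[0 : R[i]]/((0 : R)%:C)%C vnormZR normr0 mul0r. Qed.

Lemma sqrt_sqnormc_le_vnorm x j : Num.sqrt (sqnormc (x j 0)) <= vnorm x.
Proof.
rewrite ler_sqrt ?sqvnorm_ge0 // -/(sqvnorm x) /sqvnorm (bigD1 j) //= lerDl.
by apply: sumr_ge0 => i _; apply: sqnormc_ge0.
Qed.

End EuclideanNorm.

Lemma ler_vnorm_sum (R : realType) (p : nat) (I : finType) (f : I -> 'cV[R[i]]_p) :
  vnorm (\sum_j f j) <= \sum_j vnorm (f j).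
Proof.
elim/big_rec2: _ => [|j u su _ IH]; first by rewrite vnorm0.
exact: le_trans (ler_vnormD _ _) (lerD (lexx _) IH).
Qed.

Section SpectralNorm.
Variable R : realType.

Lemma mulmx_sum_col m p (M : 'M[R[i]]_(m, p)) (x : 'cV[R[i]]_p) :
  M *m x = \sum_j x j 0 *: col j M.
Proof.
apply/matrixP => a b; rewrite !mxE summxE; apply: eq_bigr => j _.
by rewrite !mxE (ord1 b) mulrC.
Qed.

Lemma vnorm_mulmx_le_sum_col m p (M : 'M[R[i]]_(m, p)) x :
  vnorm (M *m x) <= (\sum_j vnorm (col j M)) * vnorm x.
Proof.
rewrite mulmx_sum_col (le_trans (ler_vnorm_sum _)) // mulr_suml.
apply: ler_sum => j _; rewrite vnormZ mulrC ler_wpM2l ?vnorm_ge0 //.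
exact: sqrt_sqnormc_le_vnorm.
Qed.

Variables m p : nat.
Implicit Types M N : 'M[R[i]]_(m, p).

Definition gain_set M : set R :=
  fun t => exists x : 'cV[R[i]]_p, vnorm x <= 1 /\ t = vnorm (M *m x).

Lemma gain_set0 M : gain_set M 0.
Proof. by exists 0; rewrite mulmx0 !vnorm0 ler01. Qed.

Lemma has_sup_gain_set M : has_sup (gain_set M).
Proof.
split; first by exists 0; apply: gain_set0.
exists (\sum_j vnorm (col j M)) => _ [x [x_le1 ->]].
rewrite (le_trans (vnorm_mulmx_le_sum_col _ _)) // ler_piMr //.
by apply: sumr_ge0 => j _; apply: vnorm_ge0.
Qed.

Lemma specnorm_ge0 M : 0 <= specnorm M.
Proof. exact: (sup_upper_bound (has_sup_gain_set M) (gain_set0 M)). Qed.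

Lemma vnorm_mulmx_le M x : vnorm (M *m x) <= specnorm M * vnorm x.
Proof.
have [x_gt0|] := ltrP 0 (vnorm x); last first.
  move=> x_le0; have x0 : vnorm x = 0 by apply/le_anti; rewrite x_le0 vnorm_ge0.
  by rewrite (le_trans (vnorm_mulmx_le_sum_col _ _)) // x0 !mulr0.
set u := (((vnorm x)^-1)%:C)%C *: x.
have u1 : vnorm u = 1 by rewrite vnormZR ger0_norm ?invr_ge0 ?vnorm_ge0 // mulVf ?gt_eqF.
have : gain_set M (vnorm (M *m u)) by exists u; rewrite u1.
move/(sup_upper_bound (has_sup_gain_set M)).
rewrite -scalemxAr vnormZR ger0_norm ?invr_ge0 ?vnorm_ge0 //.
by rewrite ler_pdivrMl // mulrC.
Qed.

Lemma specnorm_le M (K : R) :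
  0 <= K -> (forall x, vnorm (M *m x) <= K * vnorm x) -> specnorm M <= K.
Proof.
move=> K_ge0 MK; apply: ge_sup; first by exists 0; apply: gain_set0.
by move=> _ [x [x_le1 ->]]; rewrite (le_trans (MK x)) // ler_piMr.
Qed.

Lemma ler_specnormD M N : specnorm (M + N) <= specnorm M + specnorm N.
Proof.
apply: specnorm_le => [|x]; first by rewrite addr_ge0 ?specnorm_ge0.
by rewrite mulmxDl mulrDl (le_trans (ler_vnormD _ _)) // lerD ?vnorm_mulmx_le.
Qed.

Lemma specnormZR (t : R) M : specnorm ((t%:C)%C *: M) = `|t| * specnorm M.
Proof.
have specnormZR_le s N : specnorm ((s%:C)%C *: N) <= `|s| * specnorm N.
  apply: specnorm_le => [|x]; first by rewrite mulr_ge0 ?specnorm_ge0.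
  by rewrite -scalemxAl vnormZR -mulrA ler_wpM2l ?vnorm_mulmx_le.
apply/le_anti; rewrite specnormZR_le /=.
have [->|t_neq0] := eqVneq t 0; first by rewrite normr0 mul0r specnorm_ge0.
have := specnormZR_le t^-1 ((t%:C)%C *: M).
rewrite scalerA -rmorphM mulVf // scale1r normrV ?unitfE // => le_M.
by rewrite -ler_pdivlMl ?normr_gt0.
Qed.

Lemma specnormN M : specnorm (- M) = specnorm M.
Proof.
by rewrite -scaleN1r -(rmorphN1 (real_complex R)) specnormZR normrN1 mul1r.
Qed.

Lemma specnorm0 : specnorm (0 : 'M[R[i]]_(m, p)) = 0.
Proof.
apply/le_anti; rewrite specnorm_ge0 andbT.
by apply: specnorm_le => // x; rewrite mul0mx vnorm0 mul0r.
Qed.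

End SpectralNorm.

Lemma specnorm1_le (R : realType) m : specnorm (1%:M : 'M[R[i]]_m) <= 1.
Proof. by apply: specnorm_le => // x; rewrite mul1mx mul1r. Qed.

Lemma ler_specnormM (R : realType) m p q (M : 'M[R[i]]_(m, p)) (N : 'M[R[i]]_(p, q)) :
  specnorm (M *m N) <= specnorm M * specnorm N.
Proof.
apply: specnorm_le => [|x]; first by rewrite mulr_ge0 ?specnorm_ge0.
rewrite -mulmxA -mulrA (le_trans (vnorm_mulmx_le _ _)) //.
by rewrite ler_wpM2l ?specnorm_ge0 ?vnorm_mulmx_le.
Qed.

Section Adjoint.
Variable R : realType.

Lemma ctrans_mul m p q (M : 'M[R[i]]_(m, p)) (N : 'M[R[i]]_(p, q)) :
  ctrans (M *m N) = ctrans N *m ctrans M.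
Proof. by rewrite /ctrans trmx_mul map_mxM. Qed.

Lemma ctransD m p (M N : 'M[R[i]]_(m, p)) : ctrans (M + N) = ctrans M + ctrans N.
Proof. by apply/matrixP => a b; rewrite !mxE rmorphD. Qed.

Lemma ctransK m p (M : 'M[R[i]]_(m, p)) : ctrans (ctrans M) = M.
Proof. by apply/matrixP => a b; rewrite !mxE conjcK. Qed.

Lemma redotE p (x y : 'cV[R[i]]_p) : redot x y = complex.Re ((ctrans x *m y) 0 0).
Proof.
rewrite mxE (raddf_sum (@complex.Re R)); apply: eq_bigr => j _.
by rewrite !mxE; case: (x j 0) => a b; case: (y j 0) => c d /=; ring.
Qed.

Lemma redot_mulmx m p (M : 'M[R[i]]_(m, p)) (x : 'cV[R[i]]_m) (y : 'cV[R[i]]_p) :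
  redot x (M *m y) = redot (ctrans M *m x) y.
Proof. by rewrite !redotE ctrans_mul ctransK mulmxA. Qed.

Lemma specnorm_ctrans m p (M : 'M[R[i]]_(m, p)) : specnorm (ctrans M) = specnorm M.
Proof.
suff specnorm_ctrans_le m' p' (N : 'M[R[i]]_(m', p')) : specnorm (ctrans N) <= specnorm N.
  by apply/le_anti; rewrite specnorm_ctrans_le -{1}(ctransK M) specnorm_ctrans_le.
apply: specnorm_le => [|x]; first exact: specnorm_ge0.
set y := ctrans N *m x.
have y_sqr : vnorm y ^+ 2 <= specnorm N * vnorm x * vnorm y.
  rewrite sqr_vnorm sqvnorm_redot {1}/y -redot_mulmx (le_trans (redot_le _ _)) //.
  by rewrite [leLHS]mulrC mulrAC ler_wpM2r ?vnorm_ge0 // vnorm_mulmx_le.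
have [y_gt0|] := ltrP 0 (vnorm y); first by rewrite -(ler_pM2r y_gt0) -expr2.
by move/le_trans; apply; rewrite mulr_ge0 ?vnorm_ge0 ?specnorm_ge0.
Qed.

End Adjoint.

Section GramPerturbation.
Variable R : realType.

Definition gram m p (M : 'M[R[i]]_(m, p)) : 'M[R[i]]_m := M *m ctrans M.

Lemma specnorm_mulmx_ctrans_le m p q (M : 'M[R[i]]_(m, p)) (N : 'M[R[i]]_(q, p)) :
  specnorm (M *m ctrans N) <= specnorm M * specnorm N.
Proof. by rewrite -(specnorm_ctrans N) ler_specnormM. Qed.

Variables n r : nat.
Implicit Types (C : 'M[R[i]]_n) (W X e : 'M[R[i]]_(n, r)).

Lemma gram_mulmxD_sub C W X e :
  gram (C *m W + e) - gram (C *m X) =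
  C *m (gram W - gram X) *m ctrans C
    + (C *m W *m ctrans e + (e *m ctrans (C *m W) + e *m ctrans e)).
Proof.
rewrite /gram ctransD !ctrans_mul !mulmxDl !mulmxDr !mulmxN ?mulNmx !mulmxA mulmxBl.
by rewrite addrAC [_ + _ - _]addrAC !addrA.
Qed.

Lemma specnorm_gram_mulmxD_sub_le C W X e : specnorm C <= 1 ->
  specnorm (gram (C *m W + e) - gram (C *m X))
    <= specnorm (gram W - gram X) + 2 * specnorm W * specnorm e + specnorm e ^+ 2.
Proof.
move=> C_le1; set G := gram W - gram X.
have C_contr q (M : 'M[R[i]]_(n, q)) : specnorm (C *m M) <= specnorm M.
  exact: le_trans (ler_specnormM C M) (ler_piMl (specnorm_ge0 M) C_le1).
have CGC : specnorm (C *m G *m ctrans C) <= specnorm G.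
  apply: le_trans (specnorm_mulmx_ctrans_le (C *m G) C) _.
  exact: le_trans (ler_piMr (specnorm_ge0 _) C_le1) (C_contr _ G).
have CWe : specnorm (C *m W *m ctrans e) <= specnorm W * specnorm e.
  exact: le_trans (specnorm_mulmx_ctrans_le (C *m W) e) (ler_wpM2r (specnorm_ge0 e) (C_contr _ W)).
have eCW : specnorm (e *m ctrans (C *m W)) <= specnorm W * specnorm e.
  rewrite [leRHS]mulrC.
  exact: le_trans (specnorm_mulmx_ctrans_le e (C *m W)) (ler_wpM2l (specnorm_ge0 e) (C_contr _ W)).
have ee : specnorm (e *m ctrans e) <= specnorm e ^+ 2.
  by rewrite expr2; apply: specnorm_mulmx_ctrans_le.
rewrite gram_mulmxD_sub -mulrA mulr_natl mulr2n -!addrA.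
apply: le_trans (ler_specnormD _ _) (lerD CGC _).
apply: le_trans (ler_specnormD _ _) (lerD CWe _).
exact: le_trans (ler_specnormD _ _) (lerD eCW ee).
Qed.

End GramPerturbation.

(* The tolerance is the positive root [y] of [4 y^2 + 4 w y = 2 eps / (c J)]; with [x <= c y]
   and [c <= 2] it gives [2 w x + x^2 <= c (2 w y + 2 y^2) = eps / J]. *)
Lemma tolerance_increment_le (R : rcfType) (eps J c w x y : R) :
  0 < eps -> 0 < J -> 0 <= c -> c <= 2 -> 0 <= w -> 0 <= x -> 0 <= y -> x <= c * y ->
  y <= 2^-1 * (Num.sqrt (w ^+ 2 + 2 * eps / (c * J)) - w) ->
  2 * w * x + x ^+ 2 <= eps / J.
Proof.
move=> eps_gt0 J_gt0 c_ge0 c_le2 w_ge0 x_ge0 y_ge0 x_le y_le.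
have [c_gt0|c_le0] := ltrP 0 c; last first.
  have x0 : x = 0 by apply/le_anti; rewrite x_ge0 (le_trans x_le) // mulr_le0_ge0.
  by rewrite x0 mulr0 expr0n addr0 divr_ge0 ?ltW.
set D := 2 * eps / (c * J).
have D_ge0 : 0 <= D by rewrite divr_ge0 ?mulr_ge0 ?ltW.
have cD : c * D = 2 * (eps / J) by rewrite /D; field; rewrite ?gt_eqF.
have sqr_le : (2 * y + w) ^+ 2 <= w ^+ 2 + D.
  rewrite -(sqr_sqrtr (addr_ge0 (sqr_ge0 w) D_ge0)) ler_pXn2r ?nnegrE ?sqrtr_ge0 //.
    by move: y_le; lra.
  by rewrite addr_ge0 ?mulr_ge0.
have x_sqr : x ^+ 2 <= (c * y) ^+ 2 by rewrite ler_pXn2r ?nnegrE ?mulr_ge0.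
have cc_y : c * c * y ^+ 2 <= 2 * c * y ^+ 2 by rewrite !ler_wpM2r ?sqr_ge0.
have wx : w * x <= w * (c * y) by apply: ler_wpM2l.
have c_sqr_le := ler_wpM2l c_ge0 sqr_le.
lra.
Qed.

Section ShiftedResolvent.
Variables (R : realType) (n : nat) (A : 'M[R]_n) (a : R[i]).
Hypothesis Re_a_lt0 : complex.Re a < 0.

Lemma sqr_gam : gam a ^+ 2 = - 2 * complex.Re a.
Proof. by rewrite /gam sqr_sqrtr // mulNr -mulrN mulr_ge0 // oppr_ge0 ltW. Qed.

Lemma oppr_conjc_shift : - conjc a = a + ((gam a ^+ 2)%:C)%C.
Proof.
rewrite sqr_gam; case: a => x y /=.
by apply/eqP; rewrite eq_complex /= !addr0 opprK eqxx andbT; apply/eqP; ring.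
Qed.

Hypothesis shift_unit : shiftA A a \in unitmx.

Lemma cayleyE : cayley A a = 1%:M + ((gam a ^+ 2)%:C)%C *: invmx (shiftA A a).
Proof.
rewrite /cayley; have -> : cmx A - (conjc a)%:M = shiftA A a + (((gam a ^+ 2)%:C)%C)%:M.
  by rewrite /shiftA -addrA -raddfN /= oppr_conjc_shift raddfD.
by rewrite mulmxDr mulVmx // mul_mx_scalar.
Qed.

Lemma specnorm_invmx_shift_le2 :
  specnorm (cayley A a) <= 1 -> specnorm (invmx (shiftA A a)) * gam a ^+ 2 <= 2.
Proof.
move=> C_le1.
have -> : specnorm (invmx (shiftA A a)) * gam a ^+ 2 = specnorm (cayley A a - 1%:M).
  by rewrite cayleyE addrC addKr specnormZR ger0_norm ?sqr_ge0 // mulrC.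
apply: le_trans (ler_specnormD _ _) _; rewrite specnormN.
exact: lerD C_le1 (specnorm1_le R n).
Qed.

End ShiftedResolvent.

Lemma w_inex_succ (R : realType) n r (A : 'M[R]_n) (B : 'M[R]_(n, r)) alpha v k :
  complex.Re (alpha k.+1) < 0 -> shiftA A (alpha k.+1) \in unitmx ->
  w_inex B alpha v k.+1 = cayley A (alpha k.+1) *m w_inex B alpha v k
    - ((gam (alpha k.+1) ^+ 2)%:C)%C *: (invmx (shiftA A (alpha k.+1)) *m s_res A B alpha v k.+1).
Proof.
move=> Re_lt0 shift_unit.
have vE : v k.+1 = invmx (shiftA A (alpha k.+1)) *m (w_inex B alpha v k - s_res A B alpha v k.+1).
  by rewrite /s_res /= opprB addrC subrK mulKmx.
rewrite cayleyE //= {1}vE mulmxDl mul1mx -scalemxAl mulmxBr scalerBr addrA.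
by rewrite scalemxAl.
Qed.

Section InexactLRADI.
Variables (R : realType) (n r : nat) (A : 'M[R]_n) (B : 'M[R]_(n, r)).
Variables (alpha : nat -> R[i]) (v : nat -> 'M[R[i]]_(n, r)) (jmax : nat) (eps : R).
Hypotheses (jmax_gt0 : (0 < jmax)%N) (eps_gt0 : 0 < eps).
Hypothesis shifts_admissible : forall j, (1 <= j <= jmax)%N ->
  [/\ complex.Re (alpha j) < 0, shiftA A (alpha j) \in unitmx &
      specnorm (cayley A (alpha j)) < 1].
Hypothesis solve_tolerance : forall k, (1 <= k <= jmax)%N ->
  specnorm (s_res A B alpha v k) <=
    2^-1 * (Num.sqrt (specnorm (w_inex B alpha v k.-1) ^+ 2
              + 2 * eps / (specnorm (invmx (shiftA A (alpha k))) * gam (alpha k) ^+ 2 * jmax%:R))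
            - specnorm (w_inex B alpha v k.-1)).

Local Notation W := (w_inex B alpha v).
Local Notation X := (w_exact A B alpha).

Lemma gram_gap_succ_le k : (k < jmax)%N ->
  specnorm (gram (W k.+1) - gram (X k.+1))
    <= specnorm (gram (W k) - gram (X k)) + eps / jmax%:R.
Proof.
move=> lt_k_jmax; have k1_range : (1 <= k.+1 <= jmax)%N := lt_k_jmax.
have [Re_lt0 shift_unit C_lt1] := shifts_admissible k1_range.
have J_gt0 : 0 < jmax%:R :> R by rewrite ltr0n.
have e_le : specnorm (- ((gam (alpha k.+1) ^+ 2)%:C%C *:
                          (invmx (shiftA A (alpha k.+1)) *m s_res A B alpha v k.+1)))
    <= specnorm (invmx (shiftA A (alpha k.+1))) * gam (alpha k.+1) ^+ 2
       * specnorm (s_res A B alpha v k.+1).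
  rewrite specnormN specnormZR (ger0_norm (sqr_ge0 _)) [leRHS]mulrAC [leRHS]mulrC.
  by apply: ler_wpM2l; [exact: sqr_ge0 | exact: ler_specnormM].
rewrite (@w_inex_succ R n r A B alpha v k Re_lt0 shift_unit) /=.
apply: le_trans (specnorm_gram_mulmxD_sub_le _ _ _ (ltW C_lt1)) _.
rewrite -addrA; apply: lerD (lexx _) _.
exact: tolerance_increment_le eps_gt0 J_gt0
  (mulr_ge0 (specnorm_ge0 _) (sqr_ge0 _)) (specnorm_invmx_shift_le2 Re_lt0 shift_unit (ltW C_lt1))
  (specnorm_ge0 _) (specnorm_ge0 _) (specnorm_ge0 _) e_le (solve_tolerance k1_range).
Qed.

Lemma gram_gap_le k : (k <= jmax)%N ->
  specnorm (gram (W k) - gram (X k)) <= k%:R * (eps / jmax%:R).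
Proof.
elim: k => [_|k IH lt_k_jmax]; first by rewrite subrr specnorm0 mul0r.
rewrite -natr1 mulrDl mul1r.
exact: le_trans (gram_gap_succ_le lt_k_jmax) (lerD (IH (ltnW lt_k_jmax)) (lexx _)).
Qed.

End InexactLRADI.

Theorem theorem3p7 (R : realType) (n r : nat) (A : 'M[R]_n) (B : 'M[R]_(n, r))
    (jmax : nat) (eps : R) (alpha : nat -> R[i]) (v : nat -> 'M[R[i]]_(n, r)) :
  (1 <= jmax)%N -> 0 < eps -> eps < 1 ->
  (forall j, (1 <= j <= jmax)%N ->
     [/\ complex.Re (alpha j) < 0,
         shiftA A (alpha j) \in unitmx &
         specnorm (cayley A (alpha j)) < 1]) ->
  (forall k, (1 <= k <= jmax)%N ->
     specnorm (s_res A B alpha v k) <=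
       2^-1 * (Num.sqrt (specnorm (w_inex B alpha v k.-1) ^+ 2
                 + 2 * eps / (specnorm (invmx (shiftA A (alpha k)))
                              * gam (alpha k) ^+ 2 * jmax%:R))
               - specnorm (w_inex B alpha v k.-1))) ->
  specnorm (w_inex B alpha v jmax *m ctrans (w_inex B alpha v jmax))
    <= specnorm (w_exact A B alpha jmax *m ctrans (w_exact A B alpha jmax)) + eps.
Proof.
move=> jmax_gt0 eps_gt0 _ shifts_admissible solve_tolerance.
have gap := gram_gap_le jmax_gt0 eps_gt0 shifts_admissible solve_tolerance (leqnn jmax).
rewrite mulrC divfK ?pnatr_eq0 -?lt0n // in gap.
rewrite -/(gram (w_inex B alpha v jmax)) -/(gram (w_exact A B alpha jmax)).
rewrite -(subrK (gram (w_exact A B alpha jmax)) (gram (w_inex B alpha v jmax))) [leRHS]addrC.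
exact: le_trans (ler_specnormD _ _) (lerD gap (lexx _)).
Qed.
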